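(* For every even integer $c\ge 4$ there exist a graph $G=(V,E)$, a $(1/c,c)$-kernel $\kappa(G)=(V,\kappa(E))$ of $G$ (with respect to some partition of $V$ into tight and slack nodes), and a maximal matching $M$ in $\kappa(G)$ such that the size of a maximum matching in $G$ is at least $4|M|$.
   Context: Let $\mathcal N_v$ denote the set of neighbors of $v$ in $G$. A subgraph $\kappa(G)=(V,\kappa(E))$ with $\kappa(E)\subseteq E$ is given, together with a partition of $V$ into tight nodes $\kappa_T(V)$ and slack nodes $\kappa_S(V)$. For $v\in V$ let $\kappa(\mathcal N_v)=\{u\in\mathcal N_v:(u,v)\in\kappa(E)\}$ (the friends of $v$). For $c\ge1$ and $\epsilon\in[0,1/3)$, $\kappa(G)$ is an $(\epsilon,c)$-kernel of $G$ (w.r.t. this partition) iff: (i) $|\kappa(\mathcal N_v)|\le(1+\epsilon)c$ for all $v\in V$; (ii) $|\kappa(\mathcal N_v)|\ge(1-\epsilon)c$ for all $v\in\kappa_T(V)$; (iii) for all $u,v\in\kappa_S(V)$, if $(u,v)\in E$ then $(u,v)\in\kappa(E)$. *)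

From HB Require Import structures.
From mathcomp Require Import all_boot all_order all_algebra.
Set Implicit Arguments. Unset Strict Implicit. Unset Printing Implicit Defensive.
Import Order.TTheory GRing.Theory Num.Theory.

Definition simple_graph (T : finType) (E : rel T) : Prop :=
  irreflexive E /\ symmetric E.

Definition nbrs (T : finType) (E : rel T) (v : T) : {set T} := [set u | E u v].

(* (eps, c)-kernel: kE is the edge relation of the subgraph kappa(G),
   tight is the set of tight nodes (slack nodes are its complement). *)
Definition is_kernel (T : finType) (E kE : rel T) (tight : {set T})
    (eps : rat) (c : nat) : Prop :=
  [/\ ((1 <= c)%N /\ (0 <= eps)%R /\ (eps < 1 / 3)%R /\
       symmetric kE /\ subrel kE E),
      (forall v : T, (#|nbrs kE v|%:R <= (1 + eps) * c%:R :> rat)%R),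
      (forall v : T, v \in tight -> ((1 - eps) * c%:R <= #|nbrs kE v|%:R :> rat)%R)
    &
      (forall u v : T, u \notin tight -> v \notin tight -> E u v -> kE u v)].

Definition is_matching (T : finType) (E : rel T) (M : {set {set T}}) : bool :=
  [forall e in M, [exists u, [exists v, [&& u != v, E u v & e == [set u; v]]]]] &&
  [forall e in M, [forall f in M, (e != f) ==> [disjoint e & f]]].

Definition is_maximal_matching (T : finType) (E : rel T) (M : {set {set T}}) : Prop :=
  is_matching E M /\
  forall M' : {set {set T}}, is_matching E M' -> M \subset M' -> M' = M.

Definition max_matching_size (T : finType) (E : rel T) : nat :=
  \max_(M : {set {set T}} | is_matching E M) #|M|.

From HB Require Import structures.
From mathcomp Require Import all_boot all_order all_algebra.
From mathcomp Require Import zify.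
Import Order.TTheory GRing.Theory Num.Theory.

Set Implicit Arguments.
Unset Strict Implicit.
Unset Printing Implicit Defensive.

(* On 4c vertices take layers A = [0, c), B = [c, 2c) and pendant vertices
   [2c, 4c).  The kernel consists of the perfect matching {2i, 2i+1} on A and
   the complete bipartite graph between A and B minus the perfect matching
   {a, a + c}; G adds the pendant edges {v, v + 2c} for v in A and B.  With
   A and B tight, kernel degrees are c on A, c - 1 on B and 0 on the pairwise
   non-adjacent pendant vertices, so this is a (1/c, c)-kernel.  Every kernel
   edge meets A, so the c/2 edges {2i, 2i+1} form a maximal matching of the
   kernel, while the 2c pendant edges form a matching of G. *)

Lemma leq_card_max_matching (T : finType) (E : rel T) (M : {set {set T}}) :
  is_matching E M -> #|M| <= max_matching_size E.
Proof. exact: leq_bigmax_cond. Qed.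

Lemma maximal_matching_of_cover (T : finType) (E : rel T) (M : {set {set T}}) :
  is_matching E M ->
  (forall u v, E u v -> exists2 e, e \in M & (u \in e) || (v \in e)) ->
  is_maximal_matching E M.
Proof.
move=> matchM coverM; split=> // M' /andP[/forall_inP edgeM' /forall_inP disjM'] sMM'.
apply/eqP; rewrite eqEsubset sMM' andbT; apply/subsetP => e eM'.
have /existsP[u /existsP[v /and3P[_ Euv /eqP def_e]]] := edgeM' e eM'.
have [f fM uv_f] := coverM u v Euv.
have [-> // | ne_ef] := eqVneq e f.
have /forall_inP/(_ f (subsetP sMM' f fM))/implyP/(_ ne_ef) disj_ef := disjM' e eM'.
rewrite disjoint_sym in disj_ef.
by case/orP: uv_f => /(disjointFr disj_ef); rewrite def_e !inE eqxx ?orbT.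
Qed.

Section MatchingOfPairs.

Variables (T I : finType) (f g : I -> T).

Definition disjoint_pairs : Prop :=
  [/\ injective f, injective g & forall i j, f i != g j].

Definition pair_edges : {set {set T}} := [set [set f i; g i] | i : I].

Hypothesis fgP : disjoint_pairs.

Lemma disjoint_pair_edges i j : i != j -> [disjoint [set f i; g i] & [set f j; g j]].
Proof.
have [f_inj g_inj f_neq_g] := fgP; move=> ne_ij.
apply/pred0P => x /=; rewrite !inE; apply/negbTE/negP.
case/andP=> /orP[]/eqP-> /orP[]/eqP.
- by move/f_inj/eqP; rewrite (negbTE ne_ij).
- by move/eqP; rewrite (negbTE (f_neq_g i j)).
- by move/esym/eqP; rewrite (negbTE (f_neq_g j i)).
- by move/g_inj/eqP; rewrite (negbTE ne_ij).
Qed.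

Lemma matching_pair_edges (E : rel T) :
  (forall i, E (f i) (g i)) -> is_matching E pair_edges.
Proof.
have [_ _ f_neq_g] := fgP; move=> E_fg.
apply/andP; split; apply/forall_inP => _ /imsetP[i _ ->].
  by apply/existsP; exists (f i); apply/existsP; exists (g i); rewrite f_neq_g E_fg /=.
apply/forall_inP => _ /imsetP[j _ ->]; apply/implyP => ne_ij.
by apply: disjoint_pair_edges; apply: contra ne_ij => /eqP->.
Qed.

Lemma card_pair_edges : #|pair_edges| = #|I|.
Proof.
have [f_inj _ f_neq_g] := fgP.
rewrite card_imset // => i j eq_ij.
have : f i \in [set f j; g j] by rewrite -eq_ij !inE eqxx.
by rewrite !inE (negbTE (f_neq_g i j)) orbF => /eqP/f_inj.
Qed.

End MatchingOfPairs.

Lemma mul1Dinvn (R : numFieldType) (c : nat) :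
  (0 < c)%N -> ((1 + 1 / c%:R) * c%:R = c.+1%:R :> R)%R.
Proof.
move=> c_gt0; rewrite mulrDl !mul1r mulVf ?pnatr_eq0 -?lt0n //.
by rewrite -addn1 natrD addrC.
Qed.

Lemma mul1Binvn (R : numFieldType) (c : nat) :
  (0 < c)%N -> ((1 - 1 / c%:R) * c%:R = c.-1%:R :> R)%R.
Proof.
case: c => // c _; rewrite mulrBl !mul1r mulVf ?pnatr_eq0 //.
by rewrite /= -natr1 addrK.
Qed.

Lemma invn_lt_third (R : numFieldType) (c : nat) :
  (3 < c)%N -> (1 / c%:R < 1 / 3 :> R)%R.
Proof. by move=> c_gt3; rewrite !div1r ltf_pV2 ?posrE ?ltr0n ?ltr_nat //; lia. Qed.

(* The other element of the pair {2i, 2i+1} containing a. *)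
Definition mate (a : nat) : nat := a + 1 - 2 * (a %% 2).

Section Construction.

Variable c : nat.
Hypothesis c_gt0 : 0 < c.

Local Notation V := 'I_(4 * c).

Definition kernel_adj (a b : nat) : bool :=
  [|| [&& a < c, b < c & b == mate a],
      [&& a < c, c <= b < 2 * c & b != a + c] |
      [&& c <= a < 2 * c, b < c & a != b + c]].

Definition graph_adj (a b : nat) : bool :=
  [|| kernel_adj a b, (a < 2 * c) && (b == a + 2 * c) | (b < 2 * c) && (a == b + 2 * c)].

Definition kE : rel V := fun u v => kernel_adj u v.
Definition gE : rel V := fun u v => graph_adj u v.
Definition tight : {set V} := [set v : V | v < 2 * c].

Lemma kernel_adjC a b : kernel_adj a b = kernel_adj b a.
Proof. by rewrite /kernel_adj /mate; apply/idP/idP; lia. Qed.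

Lemma graph_adjC a b : graph_adj a b = graph_adj b a.
Proof. by rewrite /graph_adj [kernel_adj a b]kernel_adjC; apply/idP/idP; lia. Qed.

Lemma graph_adj_irr a : graph_adj a a = false.
Proof. by rewrite /graph_adj /kernel_adj /mate; apply/negbTE; lia. Qed.

Lemma simple_gE : simple_graph gE.
Proof. by split=> [u | u v]; [exact: graph_adj_irr | exact: graph_adjC]. Qed.

Lemma kE_sym : symmetric kE.
Proof. by move=> u v; exact: kernel_adjC. Qed.

Lemma kE_sub_gE : subrel kE gE.
Proof. by move=> u v; rewrite /kE /gE /graph_adj => ->. Qed.

Lemma slack_independent (u v : V) : u \notin tight -> v \notin tight -> gE u v = false.
Proof. by rewrite !inE /gE /graph_adj /kernel_adj => ? ?; apply/negbTE; lia. Qed.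

Lemma vertex_count_gt0 : 0 < 4 * c.
Proof. by rewrite muln_gt0. Qed.

(* Out of range, [vtx k] defaults to vertex 0. *)
Definition vtx (k : nat) : V := insubd (Ordinal vertex_count_gt0) k.

Lemma vtxK k : k < 4 * c -> vtx k = k :> nat.
Proof. by rewrite val_insubd => ->. Qed.

Lemma eq_vtx (x : V) k : k < 4 * c -> (x == vtx k) = (x == k :> nat).
Proof. by move=> lt_k; rewrite -(inj_eq val_inj) /= vtxK. Qed.

Definition interval (a k : nat) : {set V} := [set v : V | a <= v < a + k].

Lemma card_interval a k : a + k <= 4 * c -> #|interval a k| = k.
Proof.
move=> le_ak; have -> : interval a k = [set vtx (a + j) | j : 'I_k].
  apply/setP => v; rewrite inE; apply/idP/imsetP => [v_ak | [j _ ->]].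
    have lt_vak : v - a < k by lia.
    by exists (Ordinal lt_vak) => //; apply/val_inj => /=; rewrite vtxK; lia.
  by have lt_j := ltn_ord j; rewrite vtxK; lia.
rewrite card_imset ?card_ord // => i j /(congr1 val) /=.
have lt_i := ltn_ord i; have lt_j := ltn_ord j.
by rewrite !vtxK; [move=> eq_ij; apply: ord_inj; lia | lia..].
Qed.

Lemma card_nbrs_kE (v : V) : ~~ odd c ->
  #|nbrs kE v| = if v < c then c else if v < 2 * c then c.-1 else 0.
Proof.
move=> c_even; have lt_v := ltn_ord v.
have card_interval_but a k (x : V) : x \in interval a k -> a + k <= 4 * c ->
    #|interval a k :\ x| = k.-1.
  move=> x_in le_ak.
  by rewrite -[in RHS](@card_interval a k le_ak) (cardsD1 x (interval a k)) x_in.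
case: ifP => [lt_vc | ge_vc]; last case: ifP => [lt_v2c | ge_v2c].
- have -> : nbrs kE v = vtx (mate v) |: (interval c c :\ vtx (v + c)).
    apply/setP => x; rewrite !inE !eq_vtx /kE /kernel_adj /mate;
      [apply/idP/idP; lia | lia..].
  rewrite cardsU1 card_interval_but ?inE ?eq_vtx ?vtxK /mate; lia.
- have -> : nbrs kE v = interval 0 c :\ vtx (v - c).
    apply/setP => x; rewrite !inE !eq_vtx /kE /kernel_adj /mate;
      [apply/idP/idP; lia | lia].
  by rewrite card_interval_but ?inE ?vtxK; lia.
- have -> : nbrs kE v = set0.
    by apply/setP => x; rewrite !inE /kE /kernel_adj; lia.
  by rewrite cards0.
Qed.

Lemma kernel_kE : ~~ odd c -> 3 < c -> is_kernel gE kE tight (1 / c%:R) c.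
Proof.
move=> c_even c_gt3; split.
- do ![split]; [lia | by rewrite divr_ge0 | exact: invn_lt_third | exact: kE_sym | exact: kE_sub_gE].
- by move=> v; rewrite mul1Dinvn // ler_nat card_nbrs_kE; do 2?case: ifP; lia.
- by move=> v; rewrite inE mul1Binvn // ler_nat card_nbrs_kE; do 2?case: ifP; lia.
- by move=> u v u_slack v_slack; rewrite slack_independent.
Qed.

Lemma vtx_injective (I : finType) (h : I -> nat) :
  injective h -> (forall i, h i < 4 * c) -> injective (fun i => vtx (h i)).
Proof. by move=> h_inj h_lt i j /(congr1 val) /=; rewrite !vtxK // => /h_inj. Qed.

Lemma vtx_neq k l : k < 4 * c -> l < 4 * c -> k != l -> vtx k != vtx l.
Proof. by move=> lt_k lt_l; rewrite -(inj_eq val_inj) /= !vtxK. Qed.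

Definition kernel_matching : {set {set V}} :=
  pair_edges (fun i : 'I_(c %/ 2) => vtx (2 * i)) (fun i => vtx (2 * i).+1).

Definition pendant_matching : {set {set V}} :=
  pair_edges (fun i : 'I_(2 * c) => vtx i) (fun i => vtx (i + 2 * c)).

Lemma disjoint_kernel_pairs :
  disjoint_pairs (fun i : 'I_(c %/ 2) => vtx (2 * i)) (fun i => vtx (2 * i).+1).
Proof.
split=> [||i j].
- by apply: vtx_injective => [i j ? | i]; [apply: ord_inj | have := ltn_ord i]; lia.
- by apply: vtx_injective => [i j ? | i]; [apply: ord_inj | have := ltn_ord i]; lia.
- by have := ltn_ord i; have := ltn_ord j; move=> *; apply: vtx_neq; lia.
Qed.

Lemma disjoint_pendant_pairs :
  disjoint_pairs (fun i : 'I_(2 * c) => vtx i) (fun i => vtx (i + 2 * c)).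
Proof.
split=> [||i j].
- by apply: vtx_injective => [i j ? | i]; [apply: ord_inj | have := ltn_ord i]; lia.
- by apply: vtx_injective => [i j ? | i]; [apply: ord_inj | have := ltn_ord i]; lia.
- by have := ltn_ord i; have := ltn_ord j; move=> *; apply: vtx_neq; lia.
Qed.

Lemma matching_kernel_matching : is_matching kE kernel_matching.
Proof.
apply: (matching_pair_edges disjoint_kernel_pairs) => i; have lt_i := ltn_ord i.
by rewrite /kE /kernel_adj !vtxK /mate; lia.
Qed.

Lemma card_kernel_matching : #|kernel_matching| = c %/ 2.
Proof. by rewrite card_pair_edges ?card_ord //; exact: disjoint_kernel_pairs. Qed.

Lemma matching_pendant_matching : is_matching gE pendant_matching.
Proof.
apply: (matching_pair_edges disjoint_pendant_pairs) => i; have lt_i := ltn_ord i.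
by rewrite /gE /graph_adj /kernel_adj !vtxK; lia.
Qed.

Lemma card_pendant_matching : #|pendant_matching| = 2 * c.
Proof. by rewrite card_pair_edges ?card_ord //; exact: disjoint_pendant_pairs. Qed.

Lemma kernel_matching_covers (w : V) :
  ~~ odd c -> w < c -> exists2 e, e \in kernel_matching & w \in e.
Proof.
move=> c_even lt_wc; have lt_half : w %/ 2 < c %/ 2 by lia.
exists [set vtx (2 * Ordinal lt_half); vtx (2 * Ordinal lt_half).+1]; first exact: imset_f.
by rewrite !inE !eq_vtx /=; lia.
Qed.

Lemma maximal_kernel_matching : ~~ odd c -> is_maximal_matching kE kernel_matching.
Proof.
move=> c_even; apply: (maximal_matching_of_cover matching_kernel_matching) => u v kE_uv.
have [lt_uc | ge_uc] := ltnP u c.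
  by have [e eM ue] := kernel_matching_covers c_even lt_uc; exists e; rewrite ?ue.
have lt_vc : v < c by move: kE_uv; rewrite /kE /kernel_adj; lia.
by have [e eM ve] := kernel_matching_covers c_even lt_vc; exists e; rewrite ?ve ?orbT.
Qed.

End Construction.

Theorem theorem3p11 (c : nat) (hc4 : (4 <= c)%N) (hceven : ~~ odd c) :
  exists (n : nat) (E kE : rel 'I_n) (tight : {set 'I_n}) (M : {set {set 'I_n}}),
    [/\ simple_graph E,
        is_kernel E kE tight (1 / c%:R)%R c,
        is_maximal_matching kE M,
        (0 < #|M|)%N
      & (4 * #|M| <= max_matching_size E)%N].
Proof.
have c_gt0 : 0 < c by lia.
exists (4 * c), (@gE c), (@kE c), (@tight c), (kernel_matching c_gt0); split.
- exact: simple_gE.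
- exact: kernel_kE.
- exact: maximal_kernel_matching.
- by rewrite card_kernel_matching; lia.
- apply: leq_trans (leq_card_max_matching (matching_pendant_matching c_gt0)).
  by rewrite card_kernel_matching card_pendant_matching; lia.
Qed.
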